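(* Let $f$ be a scoring rule on a finite candidate set $C$ with $|C|=m$. Then $f$ is neutral and consistent with linearity if and only if $f$ is induced by a cost function $\mathrm{cost}_f$ such that: (1) for all ballots $A$ and axes $\triangleleft$, $\mathrm{cost}_f(A,\triangleleft)\ge 0$, and $\mathrm{cost}_f(A,\triangleleft)=0$ if and only if $A$ is an interval of $\triangleleft$; (2) for all $A$ and $\triangleleft$, $\mathrm{cost}_f(A,\triangleleft)=\mathrm{cost}_f(A,\overleftarrow{\triangleleft})$; (3) there is a function $g:\{0,1\}^m\to\mathbb R_{\ge0}$ such that for all $A$ and $\triangleleft$, $\mathrm{cost}_f(A,\triangleleft)=g(x_{A,\triangleleft})=g(x_{A,\overleftarrow{\triangleleft}})$.
   Context: Let $C$ be a finite set of $m$ candidates. An approval ballot is a nonempty subset $A\subseteq C$. A profile $P$ is a finite sequence (multiset) of approval ballots. An axis is a strict linear order $\triangleleft$ on $C$; $\overleftarrow{\triangleleft}$ denotes the reverse order; $\mathcal A$ is the set of all axes on $C$. A ballot $A$ is an interval of $\triangleleft$ if for all $a,b\in A$ and every $c$ with $a\triangleleft c\triangleleft b$ we have $c\in A$. A profile is linear if some axis makes all of its ballots intervals; $\mathrm{con}(P)$ is the set of such axes. An axis rule $f$ maps each profile $P$ to a nonempty set $f(P)\subseteq\mathcal A$ such that $\triangleleft\in f(P)$ implies $\overleftarrow{\triangleleft}\in f(P)$. A scoring rule is an axis rule for which there is a cost function $\mathrm{cost}:(2^C\setminus\{\emptyset\})\times\mathcal A\to\mathbb R_{\ge0}$ with $f(P)=\arg\min_{\triangleleft\in\mathcal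 A}\sum_{A\in P}\mathrm{cost}(A,\triangleleft)$ for every profile $P$; we then say $f$ is induced by this cost function. If $\triangleleft=c_1c_2\cdots c_m$ (i.e. $c_1\triangleleft c_2\triangleleft\cdots\triangleleft c_m$), the approval vector $x_{A,\triangleleft}\in\{0,1\}^m$ has $i$-th entry $1$ iff $c_i\in A$. $f$ is neutral if for every permutation $\pi$ of $C$ and every profile $P$, $f(\pi(P))=\pi(f(P))$, where $\pi$ acts on ballots elementwise and on axes by renaming candidates. $f$ is consistent with linearity if $f(P)=\mathrm{con}(P)$ for every linear profile $P$. *)

From HB Require Import structures.
From mathcomp Require Import all_boot all_order all_algebra all_fingroup.
From mathcomp Require Import reals.
Set Implicit Arguments. Unset Strict Implicit. Unset Printing Implicit Defensive.
Import Order.TTheory GRing.Theory Num.Theory.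
Local Open Scope ring_scope.

(* Candidates: a finite type C, with m = #|C|.
   An axis c_0 c_1 ... c_{m-1} is represented by its injective (hence
   bijective) rank function C -> 'I_#|C| : c_i has rank i. *)
Definition axis (C : finType) := {r : {ffun C -> 'I_#|C|} | injectiveb r}.

Definition rank (C : finType) (a : axis C) : C -> 'I_#|C| := val a.

Definition axlt (C : finType) (a : axis C) (x y : C) : bool :=
  (rank a x < rank a y)%N.

Lemma rev_axis_inj (C : finType) (a : axis C) :
  injectiveb [ffun c => rev_ord (rank a c)].
Proof.
apply/injectiveP => x y; rewrite !ffunE => /rev_ord_inj.
by move/injectiveP: (valP a); apply.
Qed.

Definition rev_axis (C : finType) (a : axis C) : axis C :=
  exist (fun r : {ffun C -> 'I_#|C|} => injectiveb r) _ (rev_axis_inj a).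

(* renaming an axis along a permutation pi of C: pi c gets rank of c *)
Lemma act_axis_inj (C : finType) (pi : {perm C}) (a : axis C) :
  injectiveb [ffun c => rank a ((pi^-1)%g c)].
Proof.
apply/injectiveP => x y; rewrite !ffunE => H.
move/injectiveP: (valP a) => /(_ _ _ H); exact: perm_inj.
Qed.

Definition act_axis (C : finType) (pi : {perm C}) (a : axis C) : axis C :=
  exist (fun r : {ffun C -> 'I_#|C|} => injectiveb r) _ (act_axis_inj pi a).

Definition is_interval (C : finType) (A : {set C}) (a : axis C) : Prop :=
  forall x y z : C, x \in A -> y \in A -> axlt a x z -> axlt a z y -> z \in A.

Definition profile (C : finType) (P : seq {set C}) : Prop :=
  forall A, A \in P -> A != set0.

Definition con (C : finType) (P : seq {set C}) : {set axis C} :=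
  [set a | [forall A in P, [forall x, [forall y, [forall z,
      [&& x \in A, y \in A, axlt a x z & axlt a z y] ==> (z \in A)]]]]].

Definition linear_profile (C : finType) (P : seq {set C}) : Prop :=
  con P != set0.

Definition axis_rule (C : finType) (f : seq {set C} -> {set axis C}) : Prop :=
  forall P, profile P ->
    f P != set0 /\ (forall a, a \in f P -> rev_axis a \in f P).

Definition total_cost (R : realType) (C : finType)
  (cost : {set C} -> axis C -> R) (P : seq {set C}) (a : axis C) : R :=
  \sum_(A <- P) cost A a.

(* f is induced by the cost function cost (costs of nonempty ballots
   are nonnegative; values on the empty set are irrelevant). *)
Definition induced_by (R : realType) (C : finType)
  (f : seq {set C} -> {set axis C}) (cost : {set C} -> axis C -> R) : Prop :=
  (forall A a, A != set0 -> 0 <= cost A a) /\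
  forall P, profile P ->
    f P = [set a | [forall b, total_cost cost P a <= total_cost cost P b]].

Definition scoring_rule (R : realType) (C : finType)
  (f : seq {set C} -> {set axis C}) : Prop :=
  axis_rule f /\ exists cost : {set C} -> axis C -> R, induced_by f cost.

Definition neutral (C : finType) (f : seq {set C} -> {set axis C}) : Prop :=
  forall (pi : {perm C}) (P : seq {set C}), profile P ->
    f [seq [set pi x | x in A] | A : {set C} <- P] = [set act_axis pi a | a in f P].

Definition consistent_with_linearity (C : finType)
  (f : seq {set C} -> {set axis C}) : Prop :=
  forall P, profile P -> linear_profile P -> f P = con P.

Definition approval_vector (C : finType) (A : {set C}) (a : axis C)
  : {ffun 'I_#|C| -> bool} :=
  [ffun i => [exists c in A, rank a c == i]].

From HB Require Import structures.
From mathcomp Require Import all_boot all_order all_algebra all_fingroup.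
From mathcomp Require Import reals.
Import Order.TTheory GRing.Theory Num.Theory.
Local Open Scope ring_scope.
Set Implicit Arguments. Unset Strict Implicit. Unset Printing Implicit Defensive.

(* Given a cost [c0] inducing a neutral axis rule [f], average it over all
   renamings of the candidates and over both orientations of the axis.  The
   result still induces [f] (each summand does, by neutrality and
   reversal-symmetry of [f]) and is invariant under renaming and reversal;
   since the permutations act transitively on axes, it depends only on the
   approval vector.  Subtracting, for each ballot [A], the minimum over all
   axes makes the cost nonnegative and zero exactly on the axes that
   minimize it for the one-ballot profile [[:: A]], i.e. by consistency with
   linearity on the axes making [A] an interval.  Conversely a cost that
   depends only on approval vectors yields a neutral rule, and a cost that
   vanishes exactly on intervals yields minimal total cost zero exactly on
   [con P] for a linear profile [P]. *)

Section Axes.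

Variable C : finType.
Implicit Types (a b : axis C) (pi : {perm C}) (A : {set C}).

Lemma rank_inj a : injective (rank a).
Proof. by move/injectiveP: (valP a). Qed.

Lemma axis_ext a b : rank a =1 rank b -> a = b.
Proof. by move=> eq_ab; apply: val_inj; apply/ffunP. Qed.

Lemma rank_act pi a c : rank (act_axis pi a) c = rank a ((pi^-1)%g c).
Proof. by rewrite /rank /= ffunE. Qed.

Lemma rank_rev a c : rank (rev_axis a) c = rev_ord (rank a c).
Proof. by rewrite /rank /= ffunE. Qed.

Lemma act_axisM pi (s : {perm C}) a :
  act_axis pi (act_axis s a) = act_axis (s * pi)%g a.
Proof. by apply: axis_ext => c; rewrite !rank_act invMg permM. Qed.

Lemma act_axis1 a : act_axis 1%g a = a.
Proof. by apply: axis_ext => c; rewrite rank_act invg1 perm1. Qed.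

Lemma act_axisK pi : cancel (act_axis pi) (act_axis pi^-1%g).
Proof. by move=> a; rewrite act_axisM mulgV act_axis1. Qed.

Lemma act_axisKV pi : cancel (act_axis pi^-1%g) (act_axis pi).
Proof. by move=> a; rewrite act_axisM mulVg act_axis1. Qed.

Lemma act_axis_inj pi : injective (act_axis pi).
Proof. exact: can_inj (act_axisK pi). Qed.

Lemma act_rev_axis pi a : act_axis pi (rev_axis a) = rev_axis (act_axis pi a).
Proof. by apply: axis_ext => c; rewrite !(rank_act, rank_rev). Qed.

Lemma rev_axisK : involutive (@rev_axis C).
Proof. by move=> a; apply: axis_ext => c; rewrite !rank_rev rev_ordK. Qed.

Lemma act_axis_transitive a b : exists pi, act_axis pi a = b.
Proof.
have [h rankK hK] : bijective (rank a).
  by apply: inj_card_bij (@rank_inj a) _; rewrite card_ord.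
have h_rank_inj : injective (fun c => h (rank b c)).
  by move=> x y /(can_inj hK) /rank_inj.
exists (perm h_rank_inj)^-1%g; apply: axis_ext => c.
by rewrite rank_act invgK permE hK.
Qed.

Lemma enum_axis_inj : injectiveb [ffun c : C => enum_rank c].
Proof. by apply/injectiveP => x y; rewrite !ffunE; exact: enum_rank_inj. Qed.

Definition enum_axis : axis C :=
  exist (fun r : {ffun C -> 'I_#|C|} => injectiveb r) _ enum_axis_inj.

Lemma imset_permM pi (s : {perm C}) A :
  [set pi x | x in [set s x | x in A]] = [set (s * pi)%g x | x in A].
Proof. by rewrite -imset_comp; apply: eq_imset => x /=; rewrite permM. Qed.

Lemma approval_vector_act pi A a :
  approval_vector [set pi x | x in A] (act_axis pi a) = approval_vector A a.
Proof.
apply/ffunP => i; rewrite !ffunE; apply/existsP/existsP => -[c].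
  case/andP => /imsetP [d dA ->]; rewrite rank_act permK => rank_d.
  by exists d; rewrite dA.
case/andP => cA rank_c; exists (pi c).
by rewrite mem_imset ?cA //= ?rank_act ?permK //; exact: perm_inj.
Qed.

Lemma approval_vectorK A a :
  [set c | approval_vector A a (rank a c)] = A.
Proof.
apply/setP => c; rewrite inE ffunE; apply/existsP/idP => [[d]|cA].
  by case/andP => dA /eqP /rank_inj <-.
by exists c; rewrite cA eqxx.
Qed.

Definition perm_profile pi (P : seq {set C}) :=
  [seq [set pi x | x in A] | A : {set C} <- P].

Lemma perm_profileP pi P : profile P -> profile (perm_profile pi P).
Proof. by move=> HP B /mapP [A AP ->]; rewrite imset_eq0; exact: HP. Qed.

End Axes.

Section Minimizers.

Variables (R : realDomainType) (T : finType).
Implicit Types (h : T -> R).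

Definition minimizers h : {set T} := [set a | [forall b, h a <= h b]].

Lemma eq_minimizers h h' : h =1 h' -> minimizers h = minimizers h'.
Proof.
by move=> eq_h; apply/setP => a; rewrite !inE; apply: eq_forallb => b; rewrite !eq_h.
Qed.

Lemma minimizers_comp h (phi psi : T -> T) : cancel psi phi ->
  minimizers (h \o phi) = phi @^-1: minimizers h.
Proof.
move=> psiK; apply/setP => a; rewrite !inE.
by apply/forallP/forallP => le_a b //=; rewrite -(psiK b); exact: le_a.
Qed.

Lemma minimizersBr h k : minimizers (fun a => h a - k) = minimizers h.
Proof.
by apply/setP => a; rewrite !inE; apply: eq_forallb => b; rewrite lerD2r.
Qed.

Lemma minimizers_sum (I : finType) (i0 : I) (F : I -> T -> R) (S : {set T}) :
  S != set0 -> (forall i, minimizers (F i) = S) ->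
  minimizers (fun a => \sum_i F i a) = S.
Proof.
case/set0Pn => s0 s0S minF; apply/setP => a; rewrite inE.
have min_le i b c : b \in S -> F i b <= F i c.
  by rewrite -(minF i) inE => /forallP.
apply/forallP/idP => [le_a|aS b]; last by apply: ler_sum => i _; exact: min_le.
apply/negPn/negP => aNS.
have lt_s0 i : F i s0 < F i a.
  move: aNS; rewrite -(minF i) inE => /forallPn [b]; rewrite -ltNge.
  exact: le_lt_trans (min_le _ _ _ s0S).
have := le_a s0; rewrite leNgt => /negP; apply.
by apply: ltr_sum => //; apply/hasP; exists i0; first exact: mem_index_enum.
Qed.

End Minimizers.

Section Intervals.

Variable C : finType.
Implicit Types (a : axis C) (A : {set C}) (P : seq {set C}).

Lemma intervalP A a :
  reflect (is_interval A a) [forall x, [forall y, [forall z,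
      [&& x \in A, y \in A, axlt a x z & axlt a z y] ==> (z \in A)]]].
Proof.
apply: (iffP idP) => [I_A x y z xA yA xz zy|I_A].
  by move/forallP: I_A => /(_ x) /forallP /(_ y) /forallP /(_ z); rewrite xA yA xz zy.
apply/forallP => x; apply/forallP => y; apply/forallP => z; apply/implyP.
by case/and4P; exact: I_A.
Qed.

Lemma conP P a : a \in con P <-> forall A, A \in P -> is_interval A a.
Proof.
rewrite inE; split => [/forallP con_a A AP|I_P].
  by move/implyP: (con_a A) => /(_ AP) /intervalP.
by apply/forallP => A; apply/implyP => AP; apply/intervalP; exact: I_P.
Qed.

Lemma con_seq1 A a : a \in con [:: A] <-> is_interval A a.
Proof.
rewrite conP; split => [I_A|I_A B]; first by apply: I_A; rewrite mem_seq1.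
by rewrite mem_seq1 => /eqP ->.
Qed.

Definition interval_seq A := enum A ++ enum (~: A).

Lemma mem_interval_seq A c : c \in interval_seq A.
Proof. by rewrite mem_cat !mem_enum inE orbN. Qed.

Lemma index_interval_seq_lt A c : (index c (interval_seq A) < #|C|)%N.
Proof.
have size_seq : size (interval_seq A) = #|C| by rewrite size_cat -!cardE cardsC.
by rewrite -size_seq index_mem mem_interval_seq.
Qed.

Lemma interval_axis_inj A :
  injectiveb [ffun c => Ordinal (index_interval_seq_lt A c)].
Proof.
apply/injectiveP => x y; rewrite !ffunE => /(congr1 val) /= eq_xy.
by rewrite -(nth_index x (mem_interval_seq A x)) eq_xy nth_index ?mem_interval_seq.
Qed.

Definition interval_axis A : axis C :=
  exist (fun r : {ffun C -> 'I_#|C|} => injectiveb r) _ (interval_axis_inj A).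

Lemma interval_axisP A : is_interval A (interval_axis A).
Proof.
move=> x y z xA yA; rewrite /axlt /rank /= !ffunE /= /interval_seq !index_cat.
rewrite !mem_enum xA yA => _; case: ifP => // zA; rewrite -cardE => lt_zy.
have : (index y (enum A) < #|A|)%N by rewrite cardE index_mem mem_enum.
by move/(ltn_trans lt_zy); rewrite ltnNge leq_addr.
Qed.

Lemma linear_profile_seq1 A : linear_profile [:: A].
Proof.
by apply/set0Pn; exists (interval_axis A); apply/con_seq1; exact: interval_axisP.
Qed.

End Intervals.

Section Symmetrization.

Variables (R : realDomainType) (C : finType) (c0 : {set C} -> axis C -> R).
Implicit Types (a b : axis C) (pi s : {perm C}) (A : {set C}).

Lemma cost_act_invariant_vector (cost : {set C} -> axis C -> R) A a :
  (forall pi A a, cost [set pi x | x in A] (act_axis pi a) = cost A a) ->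
  cost A a = cost [set c | approval_vector A a (rank (enum_axis C) c)] (enum_axis C).
Proof.
move=> cost_act; have [pi <-] := act_axis_transitive a (enum_axis C).
by rewrite -(approval_vector_act pi) approval_vectorK cost_act.
Qed.

Definition sym_cost A a : R :=
  \sum_(pi : {perm C}) (c0 [set pi x | x in A] (act_axis pi a)
           + c0 [set pi x | x in A] (rev_axis (act_axis pi a))).

Lemma sym_cost_act s A a :
  sym_cost [set s x | x in A] (act_axis s a) = sym_cost A a.
Proof.
rewrite /sym_cost [RHS](reindex_inj (mulgI s)) /=; apply: eq_bigr => pi _.
by rewrite imset_permM act_axisM.
Qed.

Lemma sym_cost_rev A a : sym_cost A (rev_axis a) = sym_cost A a.
Proof. by apply: eq_bigr => pi _; rewrite act_rev_axis rev_axisK addrC. Qed.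

Definition min_sym_cost A : R :=
  sym_cost A [arg min_(b < enum_axis C) sym_cost A b]%O.

Lemma min_sym_cost_le A b : min_sym_cost A <= sym_cost A b.
Proof. by rewrite /min_sym_cost; case: arg_minP => // i _; apply. Qed.

Lemma min_sym_cost_act s A : min_sym_cost [set s x | x in A] = min_sym_cost A.
Proof.
apply/le_anti; rewrite {2}/min_sym_cost -(sym_cost_act s) min_sym_cost_le /=.
rewrite [X in _ <= X]/min_sym_cost -[X in _ <= sym_cost _ X](act_axisKV s).
by rewrite sym_cost_act min_sym_cost_le.
Qed.

Definition normalized_cost A a : R := sym_cost A a - min_sym_cost A.

Lemma normalized_cost_ge0 A a : 0 <= normalized_cost A a.
Proof. by rewrite subr_ge0 min_sym_cost_le. Qed.

Lemma normalized_cost_act s A a :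
  normalized_cost [set s x | x in A] (act_axis s a) = normalized_cost A a.
Proof. by rewrite /normalized_cost sym_cost_act min_sym_cost_act. Qed.

Lemma normalized_cost_rev A a : normalized_cost A (rev_axis a) = normalized_cost A a.
Proof. by rewrite /normalized_cost sym_cost_rev. Qed.

Lemma normalized_cost_eq0 A a :
  normalized_cost A a = 0 <-> a \in minimizers (sym_cost A).
Proof.
rewrite inE; split => [/eqP|/forallP min_a].
  by rewrite subr_eq0 => /eqP ->; apply/forallP => b; exact: min_sym_cost_le.
by apply/eqP; rewrite subr_eq0 eq_le min_sym_cost_le andbT; exact: min_a.
Qed.

Definition vector_cost (x : {ffun 'I_#|C| -> bool}) : R :=
  normalized_cost [set c | x (rank (enum_axis C) c)] (enum_axis C).

Lemma normalized_cost_vector A a :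
  normalized_cost A a = vector_cost (approval_vector A a).
Proof. exact/cost_act_invariant_vector/normalized_cost_act. Qed.

Lemma vector_cost_ge0 x : 0 <= vector_cost x.
Proof. exact: normalized_cost_ge0. Qed.

End Symmetrization.

Lemma induced_minimizers (R : realType) (C : finType)
    (f : seq {set C} -> {set axis C}) (cost : {set C} -> axis C -> R) P :
  induced_by f cost -> profile P -> f P = minimizers (total_cost cost P).
Proof. by case=> _ f_cost; exact: f_cost. Qed.

Section NeutralRule.

Variables (R : realType) (C : finType) (f : seq {set C} -> {set axis C}).
Variable c0 : {set C} -> axis C -> R.
Hypotheses (f_rule : axis_rule f) (f_c0 : induced_by f c0) (f_neutral : neutral f).
Implicit Types (a : axis C) (pi : {perm C}) (P : seq {set C}).

Lemma rule_rev_axis P a : profile P -> (rev_axis a \in f P) = (a \in f P).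
Proof.
move=> HP; have [_ rev_fP] := f_rule HP.
by apply/idP/idP => [|/rev_fP //]; rewrite -{2}(rev_axisK a); exact: rev_fP.
Qed.

Lemma minimizers_total_perm_profile pi P : profile P ->
  minimizers (total_cost c0 (perm_profile pi P)) = [set act_axis pi a | a in f P].
Proof.
move=> HP; rewrite -(induced_minimizers f_c0 (@perm_profileP _ pi P HP)).
exact: f_neutral.
Qed.

Lemma minimizers_perm_profile pi P : profile P ->
  minimizers (total_cost c0 (perm_profile pi P) \o act_axis pi) = f P.
Proof.
move=> HP; apply/setP => a; rewrite (minimizers_comp _ (act_axisKV pi)) inE.
by rewrite minimizers_total_perm_profile // mem_imset //; exact: act_axis_inj.
Qed.

Lemma minimizers_perm_profile_rev pi P : profile P ->
  minimizers (total_cost c0 (perm_profile pi P) \o (@rev_axis C \o act_axis pi)) = f P.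
Proof.
move=> HP.
have revK : cancel (act_axis pi^-1%g \o @rev_axis C) (@rev_axis C \o act_axis pi).
  by move=> b /=; rewrite act_axisKV rev_axisK.
apply/setP => a; rewrite (minimizers_comp _ revK) inE /=.
rewrite minimizers_total_perm_profile // -act_rev_axis mem_imset ?rule_rev_axis //.
exact: act_axis_inj.
Qed.

Lemma sym_cost_induced P : profile P ->
  f P = minimizers (total_cost (sym_cost c0) P).
Proof.
move=> HP; have [fP_neq0 _] := f_rule HP.
have split_sum a : total_cost (sym_cost c0) P a = \sum_(pi : {perm C}) \sum_(i : bool)
    (if i then total_cost c0 (perm_profile pi P) (act_axis pi a)
     else total_cost c0 (perm_profile pi P) (rev_axis (act_axis pi a))).
  rewrite /total_cost /sym_cost exchange_big; apply: eq_bigr => pi _.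
  by rewrite big_bool big_split /= !big_map addrC.
rewrite (eq_minimizers split_sum); apply/esym/(minimizers_sum 1%g) => // pi.
apply: (minimizers_sum true) => // -[]; first exact: minimizers_perm_profile.
exact: minimizers_perm_profile_rev.
Qed.

Lemma normalized_cost_induced : induced_by f (normalized_cost c0).
Proof.
split=> [A a _|P HP]; first exact: normalized_cost_ge0.
rewrite sym_cost_induced // -(minimizersBr _ (\sum_(A <- P) min_sym_cost c0 A)).
by apply: eq_minimizers => a; rewrite /total_cost /normalized_cost sumrB.
Qed.

Lemma normalized_cost_eq0_interval A a :
  consistent_with_linearity f -> A != set0 ->
  normalized_cost c0 A a = 0 <-> is_interval A a.
Proof.
move=> f_lin A_neq0; have HA : profile [:: A] by move=> B; rewrite mem_seq1 => /eqP ->.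
rewrite normalized_cost_eq0 -con_seq1 -(f_lin _ HA (linear_profile_seq1 A)).
rewrite sym_cost_induced //.
by rewrite (@eq_minimizers _ _ _ (sym_cost c0 A)) // => b; rewrite /total_cost big_seq1.
Qed.

End NeutralRule.

Section InducedRule.

Variables (R : realType) (C : finType) (f : seq {set C} -> {set axis C}).
Variable cost : {set C} -> axis C -> R.
Hypothesis f_cost : induced_by f cost.
Implicit Types (a : axis C) (A : {set C}) (P : seq {set C}).

Lemma neutral_vector_cost (g : {ffun 'I_#|C| -> bool} -> R) :
  (forall A a, A != set0 -> cost A a = g (approval_vector A a)) -> neutral f.
Proof.
move=> cost_g pi P HP.
have total_act b : total_cost cost (perm_profile pi P) b
                   = total_cost cost P (act_axis pi^-1%g b).
  rewrite /total_cost big_map; apply: eq_big_seq => A AP.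
  have A_neq0 := HP A AP.
  have piA_neq0 : [set pi x | x in A] != set0 by rewrite imset_eq0.
  by rewrite !cost_g // -(approval_vector_act pi A) act_axisKV.
rewrite (induced_minimizers f_cost HP).
rewrite (induced_minimizers f_cost (@perm_profileP _ pi P HP)).
rewrite (eq_minimizers total_act) (minimizers_comp _ (act_axisK pi)).
apply/setP => a; rewrite inE -{2}(act_axisKV pi a) mem_imset //; exact: act_axis_inj.
Qed.

Lemma consistent_interval_cost :
  (forall A a, A != set0 -> 0 <= cost A a /\ (cost A a = 0 <-> is_interval A a)) ->
  consistent_with_linearity f.
Proof.
move=> cost_interval P HP /set0Pn [a0 a0_con].
have cost_ge0 A a : A \in P -> 0 <= cost A a by move/HP/(cost_interval _ a) => [].
have total_ge0 b : 0 <= total_cost cost P b.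
  by rewrite /total_cost big_seq sumr_ge0 // => A; exact: cost_ge0.
have total_con b : b \in con P -> total_cost cost P b = 0.
  move/conP => b_con; rewrite /total_cost big_seq big1 // => A AP.
  by apply/(cost_interval _ _ (HP A AP)).2; exact: b_con.
rewrite (induced_minimizers f_cost HP); apply/setP => a; rewrite inE.
apply/forallP/idP => [min_a|/total_con -> b //].
have : total_cost cost P a == 0.
  by rewrite eq_le total_ge0 andbT -(total_con _ a0_con); exact: min_a.
rewrite /total_cost big_seq psumr_eq0 => [/allP zero_a|A]; last exact: cost_ge0.
apply/conP => A AP; apply/(cost_interval _ _ (HP A AP)).2/eqP.
by have := zero_a A AP; rewrite AP.
Qed.

End InducedRule.

Theorem mainTheorem4 (R : realType) (C : finType)
  (f : seq {set C} -> {set axis C}) :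
  scoring_rule R f ->
  (neutral f /\ consistent_with_linearity f <->
   exists cost : {set C} -> axis C -> R,
     induced_by f cost /\
     (* (1) *)
     (forall A a, A != set0 ->
        0 <= cost A a /\ (cost A a = 0 <-> is_interval A a)) /\
     (* (2) *)
     (forall A a, A != set0 -> cost A a = cost A (rev_axis a)) /\
     (* (3) *)
     (exists g : {ffun 'I_#|C| -> bool} -> R,
        (forall x, 0 <= g x) /\
        forall A a, A != set0 ->
          cost A a = g (approval_vector A a) /\
          cost A a = g (approval_vector A (rev_axis a)))).
Proof.
case=> f_rule [c0 f_c0]; split=> [[f_neutral f_lin]|].
  exists (normalized_cost c0); split; first exact: normalized_cost_induced.
  split=> [A a A_neq0|].
    split; first exact: normalized_cost_ge0.
    exact: (normalized_cost_eq0_interval f_rule f_c0 f_neutral a f_lin A_neq0).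
  split=> [A a _|]; first by rewrite normalized_cost_rev.
  exists (vector_cost c0); split=> [x|A a _]; first exact: vector_cost_ge0.
  by rewrite -!normalized_cost_vector normalized_cost_rev.
case=> cost [f_cost [cost_interval [_ [g [_ cost_g]]]]]; split.
  exact: (neutral_vector_cost f_cost (fun A a A_neq0 => (cost_g A a A_neq0).1)).
exact: consistent_interval_cost f_cost cost_interval.
Qed.
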